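(* Suppose $\{x[a_1,a_2]\}_{(a_1,a_2)\in\mathbb{Z}^2}\subset\mathcal{A}(P_1,P_2)$ is a collection such that each $x[a_1,a_2]$ is pointed at $(a_1,a_2)$, and such that $x[a_1,a_2]=z_1[a_1,a_2]$ for all $(a_1,a_2)\in\mathbb{Z}^2\setminus\mathbb{Z}_{>0}^2$. Then $\{x[a_1,a_2]\}_{(a_1,a_2)\in\mathbb{Z}^2}$ is a $\underline\Bbbk$-basis of $\mathcal{A}(P_1,P_2)$.
   Context: $\Bbbk$ is an ordered field and $P_1,P_2\in\Bbbk[z]$ are monic palindromic polynomials with coefficients in the positive cone (palindromic: $P(z)=z^dP(z^{-1})$ for $d=\deg P$). With $x_1,x_2$ commuting indeterminates, define $x_k\in\Bbbk(x_1,x_2)$ for all $k\in\mathbb{Z}$ by $x_{k+1}x_{k-1}=P_1(x_k)$ if $k$ is even and $x_{k+1}x_{k-1}=P_2(x_k)$ if $k$ is odd. $\underline\Bbbk$ is the $\mathbb{Z}$-subalgebra of $\Bbbk$ generated by the coefficients of $P_1,P_2$; $\mathcal{A}(P_1,P_2)$ is the $\underline\Bbbk$-subalgebra of $\Bbbk(x_1,x_2)$ generated by all $x_k$. An element $x\in\underline\Bbbk[x_1^{\pm1},x_2^{\pm1}]$ is pointed at $(a_1,a_2)$ if $x=x_1^{-a_1}x_2^{-a_2}\sum_{p,q\ge0}c(p,q)x_1^px_2^q$ with $c(p,q)\in\underline\Bbbk$ and $c(0,0)=1$. The standard monomial is $z_1[a_1,a_2]=x_0^{[a_2]_+}x_1^{[-a_1]_+}x_2^{[-a_2]_+}x_3^{[a_1]_+}$,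 with $[a]_+=\max(a,0)$. *)

From HB Require Import structures.
From mathcomp Require Import all_boot all_order all_algebra fraction.
Set Implicit Arguments. Unset Strict Implicit. Unset Printing Implicit Defensive.
Import Order.TTheory GRing.Theory Num.Theory.
Local Open Scope ring_scope.

(* The field of rational functions k(x1,x2), realised as the fraction field
   of k[x1][x2] = {poly {poly k}}: x1 is the inner variable, x2 the outer. *)
Definition ratfun (k : realFieldType) := {fraction {poly {poly k}}}.

Definition tofracK (k : realFieldType) (f : {poly {poly k}}) : ratfun k :=
  FracField.tofrac f.

Definition X1 (k : realFieldType) : ratfun k := tofracK ('X%:P).
Definition X2 (k : realFieldType) : ratfun k := tofracK 'X.

Definition iotaK (k : realFieldType) (c : k) : ratfun k := tofracK ((c%:P)%:P).

Definition evalK (k : realFieldType) (P : {poly k}) (y : ratfun k) : ratfun k :=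
  (map_poly (@iotaK k) P).[y].

(* palindromic: P(z) = z^d P(z^-1), d = deg P, i.e. coefficient symmetry *)
Definition palindromic (k : realFieldType) (P : {poly k}) : Prop :=
  forall i : nat, (i <= (size P).-1)%N -> P`_i = P`_((size P).-1 - i).

Definition pos_coefs (k : realFieldType) (P : {poly k}) : Prop :=
  forall i : nat, 0 <= P`_i.

Section Seq.
Variables (k : realFieldType) (P1 P2 : {poly k}).

Definition Pat (j : int) : {poly k} := if odd `|j|%N then P2 else P1.

(* fwd m = (x_{m+1}, x_{m+2}) *)
Fixpoint fwd (m : nat) : ratfun k * ratfun k :=
  match m with
  | 0%N => (X1 k, X2 k)
  | m'.+1 => let: (a, b) := fwd m' in (b, evalK (Pat (m'.+2)%:Z) b / a)
  end.

(* bwd m = (x_{1-m}, x_{2-m}) *)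
Fixpoint bwd (m : nat) : ratfun k * ratfun k :=
  match m with
  | 0%N => (X1 k, X2 k)
  | m'.+1 => let: (a, b) := bwd m' in (evalK (Pat (1 - m'%:Z)) a / b, a)
  end.

(* x_j for j in Z: x_{j+1} x_{j-1} = P1(x_j) (j even), P2(x_j) (j odd) *)
Definition xseq (j : int) : ratfun k :=
  if 0 < j then (fwd `|j|.-1).1 else (bwd `|1 - j|).1.

Inductive ulk : k -> Prop :=
  | ulk_coef1 i : ulk P1`_i
  | ulk_coef2 i : ulk P2`_i
  | ulk_one : ulk 1
  | ulk_opp c : ulk c -> ulk (- c)
  | ulk_add c d : ulk c -> ulk d -> ulk (c + d)
  | ulk_mul c d : ulk c -> ulk d -> ulk (c * d).

Inductive inA : ratfun k -> Prop :=
  | inA_gen j : inA (xseq j)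
  | inA_const c : ulk c -> inA (iotaK c)
  | inA_add y z : inA y -> inA z -> inA (y + z)
  | inA_mul y z : inA y -> inA z -> inA (y * z).

(* y is an element of ulk[x1^{+-1}, x2^{+-1}] pointed at (a1,a2):
   y = x1^{-a1} x2^{-a2} sum_{p,q>=0} c(p,q) x1^p x2^q, c(p,q) in ulk, c(0,0)=1.
   The coefficient of x1^p x2^q in f : {poly {poly k}} is (f`_q)`_p. *)
Definition pointed (y : ratfun k) (a1 a2 : int) : Prop :=
  exists f : {poly {poly k}},
    (forall p q : nat, ulk (f`_q)`_p) /\ (f`_0)`_0 = 1 /\
    y = X1 k ^ (- a1) * X2 k ^ (- a2) * tofracK f.

Definition posp (a : int) : nat := match a with Posz n => n | Negz _ => 0%N end.

Definition z1 (a1 a2 : int) : ratfun k :=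
  xseq 0 ^+ posp a2 * xseq 1 ^+ posp (- a1) * xseq 2 ^+ posp (- a2)
  * xseq 3 ^+ posp a1.

Definition is_basisA (b : int * int -> ratfun k) : Prop :=
  (forall a, inA (b a)) /\
  (forall (s : seq (int * int)) (c : int * int -> k),
      uniq s -> (forall a, a \in s -> ulk (c a)) ->
      \sum_(a <- s) iotaK (c a) * b a = 0 -> forall a, a \in s -> c a = 0) /\
  (forall y, inA y -> exists (s : seq (int * int)) (c : int * int -> k),
      (forall a, a \in s -> ulk (c a)) /\ y = \sum_(a <- s) iotaK (c a) * b a).

End Seq.

From HB Require Import structures.
From mathcomp Require Import all_boot all_order all_algebra fraction.
From mathcomp Require Import ring zify.
Import Order.TTheory GRing.Theory Num.Theory.
Set Implicit Arguments. Unset Strict Implicit. Unset Printing Implicit Defensive.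
Local Open Scope ring_scope.

(* Every x_j is a subtraction-free rational function, hence nonzero, so the
   exchange relations x_{j+1} x_{j-1} = P(x_j) hold as written.  Let S be the
   ulk-span of the standard monomials.  The relations x_0 x_2 = P_2(x_1) and
   x_1 x_3 = P_1(x_2) rewrite every monomial in x_0, ..., x_3 into S, so S is a
   ring.  If u w = Q(v) and v t = R(w) with R(0) = 1 and Q palindromic of degree
   d, then modulo w we get 0 = t^d u w = t^d Q(v) = sum_i Q_i t^(d-i) R(w)^i
   = Q(t), so Q(t)/w lies in S; four consecutive x_j in S thus put the next one
   in S, and A(P1,P2) = S.
   Expanding a pointed element of A at a in the standard monomials, which are
   themselves pointed, and comparing Laurent coefficients at a componentwise
   maximal point of the support, shows that only z_1[b] with b <= a occur, and
   z_1[a] with coefficient 1.  Induction on |a1| + |a2| then shows that the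
   x[a] span S, and the same comparison shows that they are independent. *)

Section RationalFunctions.
Variable k : realFieldType.
Local Notation R := (ratfun k).
Local Notation tf := (@tofracK k).

Lemma tofracKD f g : tf (f + g) = tf f + tf g. Proof. exact: tofracD. Qed.
Lemma tofracKM f g : tf (f * g) = tf f * tf g. Proof. exact: tofracM. Qed.
Lemma tofracKN f : tf (- f) = - tf f. Proof. exact: tofracN. Qed.
Lemma tofracKX f n : tf (f ^+ n) = tf f ^+ n. Proof. exact: tofracXn. Qed.
Lemma tofracK0 : tf 0 = 0. Proof. exact: tofrac0. Qed.
Lemma tofracK1 : tf 1 = 1. Proof. exact: tofrac1. Qed.

Lemma tofracK_sum (I : Type) (s : seq I) (F : I -> {poly {poly k}}) :
  tf (\sum_(i <- s) F i) = \sum_(i <- s) tf (F i).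
Proof. exact: (rmorph_sum (@FracField.tofrac _)). Qed.

Lemma tofracK_inj : injective tf.
Proof. by move=> f g /eqP; rewrite /tofracK tofrac_eq => /eqP. Qed.

Lemma tofracK_eq0 f : (tf f == 0) = (f == 0).
Proof. exact: tofrac_eq0. Qed.

Lemma iotaKE c : iotaK c = tf (c%:P%:P). Proof. by []. Qed.
Lemma iotaK0 : iotaK (0 : k) = 0. Proof. by rewrite iotaKE !polyC0 tofracK0. Qed.
Lemma iotaK1 : iotaK (1 : k) = 1. Proof. by rewrite iotaKE !polyC1 tofracK1. Qed.
Lemma iotaKD (a b : k) : iotaK (a + b) = iotaK a + iotaK b.
Proof. by rewrite !iotaKE !polyCD tofracKD. Qed.
Lemma iotaKM (a b : k) : iotaK (a * b) = iotaK a * iotaK b.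
Proof. by rewrite !iotaKE !polyCM tofracKM. Qed.
Lemma iotaKN (a : k) : iotaK (- a) = - iotaK a.
Proof. by rewrite !iotaKE !polyCN tofracKN. Qed.

Lemma map_poly_iotaK (P : {poly k}) :
  map_poly (@iotaK k) P = map_poly (@FracField.tofrac _) (P^:P^:P).
Proof. by rewrite -!map_poly_comp. Qed.

Lemma evalK_sum (P : {poly k}) (y : R) :
  evalK P y = \sum_(i < size P) iotaK P`_i * y ^+ i.
Proof.
rewrite /evalK horner_coef size_map_inj_poly ?iotaK0 //; last first.
  by move=> a b; rewrite !iotaKE => /tofracK_inj /polyC_inj /polyC_inj.
by apply: eq_bigr => i _; rewrite coef_map_id0 // iotaK0.
Qed.

Lemma evalK_MXaddC (p : {poly k}) c y :
  evalK (p * 'X + c%:P) y = evalK p y * y + iotaK c.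
Proof.
rewrite /evalK !map_poly_iotaK !rmorphD !rmorphM /= !map_polyX !map_polyC /=.
by rewrite hornerMXaddC.
Qed.

Lemma evalK_X1 (P : {poly k}) : evalK P (X1 k) = tf (P%:P).
Proof.
rewrite /evalK map_poly_iotaK /X1 /tofracK (horner_map (@FracField.tofrac _)).
by rewrite /= (horner_map polyC) /= -[_.[_]]/(_ \Po 'X) comp_polyXr.
Qed.

Lemma evalK_X2 (P : {poly k}) : evalK P (X2 k) = tf (P^:P).
Proof.
rewrite /evalK map_poly_iotaK /X2 /tofracK (horner_map (@FracField.tofrac _)).
by rewrite /= -[_.[_]]/(_ \Po 'X) comp_polyXr.
Qed.

Lemma evalK_rev (Q : {poly k}) (t : R) :
  palindromic Q ->
  \sum_(i < size Q) iotaK Q`_i * t ^+ ((size Q).-1 - i) = evalK Q t.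
Proof.
move=> palQ; rewrite evalK_sum (reindex_inj rev_ord_inj) /=.
apply: eq_bigr => i _.
have hi : (i <= (size Q).-1)%N by rewrite -ltnS (ltn_predK (ltn_ord i)).
have -> : (size Q - i.+1)%N = ((size Q).-1 - i)%N by lia.
by rewrite subKn // -(palQ i).
Qed.

End RationalFunctions.

Section SubtractionFree.
Variable k : realFieldType.
Local Notation R := (ratfun k).
Local Notation tf := (@tofracK k).

Definition nneg_coefs2 (f : {poly {poly k}}) := forall i j, 0 <= (f`_i)`_j.

Lemma nneg_coefs2D f g : nneg_coefs2 f -> nneg_coefs2 g -> nneg_coefs2 (f + g).
Proof. by move=> hf hg i j; rewrite !coefD addr_ge0. Qed.

Lemma nneg_coefs2M f g : nneg_coefs2 f -> nneg_coefs2 g -> nneg_coefs2 (f * g).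
Proof.
move=> hf hg i j; rewrite coefM coef_sum; apply: sumr_ge0 => m _.
by rewrite coefM; apply: sumr_ge0 => l _; apply: mulr_ge0.
Qed.

Lemma nneg_coefs2C (c : k) : 0 <= c -> nneg_coefs2 (c%:P%:P).
Proof.
move=> hc i j; rewrite coefC; case: (i == 0)%N; last by rewrite coef0.
by rewrite coefC; case: (j == 0)%N.
Qed.

Lemma nneg_coefs2_X1 : nneg_coefs2 ('X%:P).
Proof.
move=> i j; rewrite coefC; case: (i == 0)%N; last by rewrite coef0.
by rewrite coefX; case: (j == 1)%N.
Qed.

Lemma nneg_coefs2_X2 : nneg_coefs2 'X.
Proof.
move=> i j; rewrite coefX; case: (i == 1)%N; last by rewrite coef0.
by rewrite coefC; case: (j == 0)%N.
Qed.

Lemma nneg_coefs2_addr_neq0 f g :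
  nneg_coefs2 f -> nneg_coefs2 g -> f != 0 -> f + g != 0.
Proof.
move=> hf hg f0.
have [i fi0] : exists i, f`_i != 0.
  by exists (size f).-1; rewrite -lead_coefE lead_coef_eq0.
have [j fij0] : exists j, (f`_i)`_j != 0.
  by exists (size f`_i).-1; rewrite -lead_coefE lead_coef_eq0.
apply/eqP => /(congr1 (fun h : {poly {poly k}} => (h`_i)`_j)).
rewrite !coefD !coef0 => /eqP.
have fij_gt0 : 0 < (f`_i)`_j by rewrite lt_def fij0 hf.
by rewrite gt_eqF // ltr_wpDr.
Qed.

Definition subfree (y : R) := exists f g,
  [/\ nneg_coefs2 f, nneg_coefs2 g, f != 0, g != 0 & y = tf f / tf g].

Lemma subfree_neq0 y : subfree y -> y != 0.
Proof.
by case=> f [g [_ _ f0 g0 ->]]; rewrite mulf_neq0 ?invr_eq0 ?tofracK_eq0.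
Qed.

Lemma subfree_tofracK f : nneg_coefs2 f -> f != 0 -> subfree (tf f).
Proof.
move=> hf f0; exists f, 1; split; rewrite ?oner_neq0 ?tofracK1 ?divr1 //.
by rewrite -!polyC1; apply: nneg_coefs2C.
Qed.

Lemma subfreeM y z : subfree y -> subfree z -> subfree (y * z).
Proof.
case=> f [g [hf hg f0 g0 ->]]; case=> f' [g' [hf' hg' f0' g0' ->]].
exists (f * f'), (g * g'); split; rewrite ?mulf_neq0 //; try exact: nneg_coefs2M.
by rewrite !tofracKM mulf_div.
Qed.

Lemma subfreeV y : subfree y -> subfree y^-1.
Proof. by case=> f [g [hf hg f0 g0 ->]]; exists g, f; rewrite invf_div. Qed.

Lemma subfreeD y z : subfree y -> subfree z -> subfree (y + z).
Proof.
case=> f [g [hf hg f0 g0 ->]]; case=> f' [g' [hf' hg' f0' g0' ->]].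
exists (f * g' + f' * g), (g * g'); split; rewrite ?mulf_neq0 //.
- by apply: nneg_coefs2D; apply: nneg_coefs2M.
- exact: nneg_coefs2M.
- by apply: nneg_coefs2_addr_neq0; rewrite ?mulf_neq0 //; apply: nneg_coefs2M.
by rewrite tofracKD !tofracKM addf_div ?tofracK_eq0.
Qed.

Lemma subfree_iotaK (c : k) : 0 < c -> subfree (iotaK c).
Proof.
move=> c_gt0; apply: subfree_tofracK; first exact/nneg_coefs2C/ltW.
by rewrite !polyC_eq0 gt_eqF.
Qed.

Lemma subfree_evalK (P : {poly k}) y : P != 0 -> (forall i, 0 <= P`_i) ->
  subfree y -> subfree (evalK P y).
Proof.
move=> + + sy; elim/poly_ind: P => [|p c IH]; first by rewrite eqxx.
move=> P0 hP; rewrite evalK_MXaddC.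
have hc : 0 <= c by have := hP 0%N; rewrite coefD coefMX coefC /= add0r.
have [p0|p0] := eqVneq p 0.
  move: P0; rewrite p0 /evalK map_poly0 horner0 !mul0r !add0r polyC_eq0 => c0.
  by apply: subfree_iotaK; rewrite lt_def hc c0.
have sp : subfree (evalK p y * y).
  apply: subfreeM => //; apply: IH => // i.
  by have := hP i.+1; rewrite coefD coefMX coefC /= addr0.
have [->|c0] := eqVneq c 0; first by rewrite iotaK0 addr0.
by apply: subfreeD => //; apply: subfree_iotaK; rewrite lt_def c0.
Qed.

Lemma subfree_X1 : subfree (X1 k).
Proof.
apply: subfree_tofracK; first exact: nneg_coefs2_X1.
by rewrite polyC_eq0 polyX_eq0.
Qed.

Lemma subfree_X2 : subfree (X2 k).
Proof. by apply: subfree_tofracK; rewrite ?polyX_eq0 //; apply: nneg_coefs2_X2. Qed.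

End SubtractionFree.

Section PalindromicExchange.
Variable k : realFieldType.
Local Notation R := (ratfun k).
Variables (ul : k -> Prop) (L : R -> Prop).
Hypotheses (ul1 : ul 1) (ulN : forall c, ul c -> ul (- c))
  (LD : forall y z, L y -> L z -> L (y + z))
  (LM : forall y z, L y -> L z -> L (y * z))
  (L_iotaK : forall c, ul c -> L (iotaK c)).

Lemma L1 : L 1.
Proof. by rewrite -iotaK1; apply: L_iotaK. Qed.

Lemma LN y : L y -> L (- y).
Proof. by move=> Ly; rewrite -mulN1r -iotaK1 -iotaKN; apply: LM => //; apply/L_iotaK/ulN. Qed.

Lemma L0 : L 0.
Proof. by rewrite -(subrr 1); apply: LD; [exact: L1 | apply/LN/L1]. Qed.

Lemma LX y n : L y -> L (y ^+ n).
Proof.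
by move=> Ly; elim: n => [|n IH]; [rewrite expr0; exact: L1 | rewrite exprS; exact: LM].
Qed.

Lemma L_sum n (F : 'I_n -> R) : (forall i, L (F i)) -> L (\sum_(i < n) F i).
Proof.
elim: n F => [|n IH] F hF; first by rewrite big_ord0; exact: L0.
by rewrite big_ord_recr /=; apply: LD => //; apply: IH.
Qed.

Definition congr_mod (w y z : R) := exists E, L E /\ y = z + w * E.

Variable w : R.
Hypothesis Lw : L w.

Lemma congr_mod_refl y : congr_mod w y y.
Proof. by exists 0; rewrite mulr0 addr0; split=> //; exact: L0. Qed.

Lemma congr_mod_sym y z : congr_mod w y z -> congr_mod w z y.
Proof. by case=> E [LE ->]; exists (- E); split; [exact: LN | ring]. Qed.

Lemma congr_mod_trans y z t : congr_mod w y z -> congr_mod w z t -> congr_mod w y t.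
Proof. by case=> E [LE ->] [E' [LE' ->]]; exists (E' + E); split; [exact: LD | ring]. Qed.

Lemma congr_modM y z y' z' : L z -> L z' ->
  congr_mod w y z -> congr_mod w y' z' -> congr_mod w (y * y') (z * z').
Proof.
move=> Lz Lz' [E [LE ->]] [E' [LE' ->]].
exists (E * z' + z * E' + w * E * E'); split; last by ring.
by apply: LD; [apply: LD|]; apply: LM => //; apply: LM.
Qed.

Lemma congr_modX y n : congr_mod w y 1 -> congr_mod w (y ^+ n) 1.
Proof.
move=> hy; elim: n => [|n IH]; first exact: congr_mod_refl.
by rewrite exprS -(mulr1 1); apply: congr_modM => //; exact: L1.
Qed.

Lemma congr_mod_sum n (F G : 'I_n -> R) :
  (forall i, congr_mod w (F i) (G i)) -> congr_mod w (\sum_(i < n) F i) (\sum_(i < n) G i).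
Proof.
elim: n F G => [|n IH] F G h; first by rewrite !big_ord0; apply: congr_mod_refl.
rewrite !big_ord_recr /=.
have [E [LE ->]] := IH _ _ (fun i => h (widen_ord (leqnSn n) i)).
have [E' [LE' ->]] := h ord_max.
by exists (E + E'); split; [exact: LD | ring].
Qed.

Lemma evalK_congr_coef0 (P : {poly k}) : (forall i, ul P`_i) ->
  congr_mod w (evalK P w) (iotaK P`_0).
Proof.
move=> hP; rewrite evalK_sum; case sP: (size P) => [|n].
  by rewrite big_ord0 nth_default ?sP // iotaK0; apply: congr_mod_refl.
exists (\sum_(i < n) iotaK P`_i.+1 * w ^+ i); split.
  by apply: L_sum => i; apply: LM; [apply: L_iotaK | apply: LX].
rewrite big_ord_recl /= expr0 mulr1 mulr_sumr.
by congr (_ + _); apply: eq_bigr => i _; rewrite exprS; ring.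
Qed.

Lemma palindromic_exchange (Q P : {poly k}) (u v t : R) :
  (forall i, ul Q`_i) -> (forall i, ul P`_i) -> P`_0 = 1 -> palindromic Q ->
  L u -> L v -> L t -> u * w = evalK Q v -> v * t = evalK P w ->
  exists E, L E /\ evalK Q t = w * E.
Proof.
move=> hQ hP P0 palQ Lu Lv Lt e1 e2; pose d := (size Q).-1.
have vt1 : congr_mod w (v * t) 1.
  by rewrite e2 -iotaK1 -P0; apply: evalK_congr_coef0.
have expand : t ^+ d * evalK Q v =
    \sum_(i < size Q) iotaK Q`_i * t ^+ (d - i) * (v * t) ^+ i.
  rewrite evalK_sum mulr_sumr; apply: eq_bigr => i _.
  have hi : (i <= d)%N by rewrite /d -ltnS (ltn_predK (ltn_ord i)).
  by rewrite exprMn -{1}(subnK hi) exprD; ring.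
have QvQt : congr_mod w (t ^+ d * evalK Q v) (evalK Q t).
  rewrite expand -evalK_rev //; apply: congr_mod_sum => i.
  rewrite -[X in congr_mod _ _ X]mulr1.
  apply: congr_modM; [apply: LM; [exact: L_iotaK | exact: LX] | exact: L1 |
    exact: congr_mod_refl |].
  exact: congr_modX.
have Qv0 : congr_mod w (t ^+ d * evalK Q v) 0.
  exists (t ^+ d * u); split; first by apply: LM => //; apply: LX.
  by rewrite -e1 add0r; ring.
have [E [LE ->]] := congr_mod_trans (congr_mod_sym QvQt) Qv0.
by exists E; rewrite add0r.
Qed.

End PalindromicExchange.

Section Span.
Variables (k : realFieldType) (P1 P2 : {poly k}).
Local Notation R := (ratfun k).
Local Notation ul := (ulk P1 P2).

Definition spanned (F : int * int -> R) (y : R) :=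
  exists l : seq (k * (int * int)), (forall p, p \in l -> ul p.1) /\
    y = \sum_(p <- l) iotaK p.1 * F p.2.

Lemma collect_terms (l : seq (k * (int * int))) : (forall p, p \in l -> ul p.1) ->
  exists (s : seq (int * int)) (c : int * int -> k), [/\ uniq s,
    forall a, a \in s -> ul (c a) &
    forall F : int * int -> R,
      \sum_(p <- l) iotaK p.1 * F p.2 = \sum_(a <- s) iotaK (c a) * F a].
Proof.
elim: l => [|[c0 a0] l IH] hl.
  by exists [::], (fun _ => 0); split=> // F; rewrite !big_nil.
have [s [c [us hc hF]]] : exists s c, [/\ uniq s, forall a, a \in s -> ul (c a) &
    forall F : int * int -> R,
      \sum_(p <- l) iotaK p.1 * F p.2 = \sum_(a <- s) iotaK (c a) * F a].
  by apply: IH => p pl; apply: hl; rewrite inE pl orbT.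
have hc0 : ul c0 by apply: (hl (c0, a0)); rewrite mem_head.
have [a0s|a0Ns] := boolP (a0 \in s).
  exists s, (fun a => if a == a0 then c a + c0 else c a); split=> //.
    by move=> a a_s /=; case: ifP => _; [apply: ulk_add => //|]; apply: hc.
  move=> F; rewrite big_cons /= hF !(bigD1_seq a0) //= eqxx iotaKD.
  rewrite (eq_bigl (fun i => i != a0)) //.
  under [in RHS]eq_bigr => i /negbTE -> do [].
  by rewrite mulrDl addrCA addrA.
exists (a0 :: s), (fun a => if a == a0 then c0 else c a); split.
- by rewrite /= a0Ns us.
- move=> a; rewrite inE => /orP [/eqP ->|a_s]; first by rewrite eqxx.
  by case: ifP => _ //; apply: hc.
move=> F; rewrite !big_cons /= eqxx hF; congr (_ + _).
apply: eq_big_seq => a a_s; case: ifP => // /eqP ea.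
by move: a0Ns; rewrite -ea a_s.
Qed.

Variable F : int * int -> R.

Lemma spanned0 : spanned F 0.
Proof. by exists [::]; rewrite big_nil. Qed.

Lemma spannedD y z : spanned F y -> spanned F z -> spanned F (y + z).
Proof.
case=> l [hl ->] [l' [hl' ->]]; exists (l ++ l'); split; last by rewrite big_cat.
by move=> p; rewrite mem_cat => /orP [/hl|/hl'].
Qed.

Lemma spannedZ c y : ul c -> spanned F y -> spanned F (iotaK c * y).
Proof.
move=> hc [l [hl ->]]; exists [seq (c * p.1, p.2) | p <- l]; split.
  by move=> q /mapP [p /hl hp ->] /=; apply: ulk_mul.
rewrite big_map mulr_sumr; apply: eq_bigr => p _ /=.
by rewrite iotaKM mulrA.
Qed.

Lemma spannedN y : spanned F y -> spanned F (- y).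
Proof.
rewrite -mulN1r -iotaK1 -iotaKN; apply: spannedZ.
exact/ulk_opp/ulk_one.
Qed.

Lemma spanned_gen a : spanned F (F a).
Proof.
exists [:: (1, a)]; split; first by move=> p; rewrite inE => /eqP -> /=; exact: ulk_one.
by rewrite big_seq1 /= iotaK1 mul1r.
Qed.

Lemma spanned_sum (I : eqType) (s : seq I) (Pr : pred I) (G : I -> R) :
  (forall i, i \in s -> Pr i -> spanned F (G i)) ->
  spanned F (\sum_(i <- s | Pr i) G i).
Proof.
elim: s => [|i s IH] h; first by rewrite big_nil; exact: spanned0.
have hs : forall j, j \in s -> Pr j -> spanned F (G j).
  by move=> j js; apply: h; rewrite inE js orbT.
rewrite big_cons; case: ifP => hP; last exact: IH.
by apply: spannedD; [apply: h; rewrite ?mem_head | exact: IH].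
Qed.

End Span.

Lemma spanned_trans (k : realFieldType) (P1 P2 : {poly k}) (F G : int * int -> ratfun k) y :
  (forall a, spanned P1 P2 G (F a)) -> spanned P1 P2 F y -> spanned P1 P2 G y.
Proof.
move=> h [l [hl ->]]; apply: spanned_sum => p pl _.
exact: spannedZ (hl p pl) (h _).
Qed.

Section LaurentCoefficients.
Variable k : realFieldType.
Local Notation R := (ratfun k).
Local Notation tf := (@tofracK k).

Definition coef2 (f : {poly {poly k}}) (d : int * int) : k :=
  if (0 <= d.1) && (0 <= d.2) then (f`_`|d.2|)`_`|d.1| else 0.

Definition sub2 (b m : int * int) : int * int := (b.1 - m.1, b.2 - m.2).

Definition abs_bound (s : seq (int * int)) : nat := \sum_(b <- s) (`|b.1| + `|b.2|)%N.

Lemma abs_bound_mem s b : b \in s -> (`|b.1| <= abs_bound s)%N /\ (`|b.2| <= abs_bound s)%N.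
Proof.
elim: s => [|b' s IH] //; rewrite inE /abs_bound big_cons -/(abs_bound s).
case/orP => [/eqP ->|/IH [h1 h2]].
  by split; [rewrite -addnA leq_addr | rewrite addnAC leq_addl].
by split; [exact: leq_trans h1 (leq_addl _ _) | exact: leq_trans h2 (leq_addl _ _)].
Qed.

Lemma coef2_shift (f : {poly {poly k}}) (e1 e2 u v : nat) :
  ((('X^u)%:P * ('X^v * f))`_e2)`_e1 = coef2 f (e1%:Z - u%:Z, e2%:Z - v%:Z).
Proof.
rewrite /coef2 /= coefCM !coefXnM.
have -> : (0 <= e1%:Z - u%:Z) = (u <= e1)%N by apply/idP/idP; lia.
have -> : (0 <= e2%:Z - v%:Z) = (v <= e2)%N by apply/idP/idP; lia.
case: (ltnP e1 u) => h1; case: (ltnP e2 v) => h2 /=; rewrite ?andbF ?andbT ?coef0 //.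
have -> : `|e1%:Z - u%:Z|%N = (e1 - u)%N by lia.
by have -> : `|e2%:Z - v%:Z|%N = (e2 - v)%N by lia.
Qed.

Lemma X1_neq0 : X1 k != 0. Proof. exact/subfree_neq0/subfree_X1. Qed.
Lemma X2_neq0 : X2 k != 0. Proof. exact/subfree_neq0/subfree_X2. Qed.

Lemma exprzN_mulXn (y : R) (b : int) (N : nat) : y != 0 -> (`|b| <= N)%N ->
  y ^ (- b) * y ^+ N = y ^+ `|N%:Z - b|.
Proof.
move=> y0 hb; rewrite exprnP -expfzDr //.
by have -> : - b + N%:Z = `|N%:Z - b|%N%:Z by lia.
Qed.

Lemma laurent_term_tofracK (c : k) (b : int * int) (f : {poly {poly k}}) (N : nat) :
  (`|b.1| <= N)%N -> (`|b.2| <= N)%N ->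
  iotaK c * (X1 k ^ (- b.1) * X2 k ^ (- b.2) * tf f) * (X1 k ^+ N * X2 k ^+ N) =
  tf (c%:P%:P * (('X^`|N%:Z - b.1|)%:P * ('X^`|N%:Z - b.2| * f))).
Proof.
move=> h1 h2; rewrite !tofracKM -iotaKE rmorphXn !tofracKX.
rewrite -[tf ('X%:P)]/(X1 k) -[tf 'X]/(X2 k).
rewrite -(exprzN_mulXn X1_neq0 h1) -(exprzN_mulXn X2_neq0 h2).
set A := X1 k ^ (- b.1); set B := X2 k ^ (- b.2).
ring.
Qed.

Lemma coef_laurent_term (c : k) (b m : int * int) (f : {poly {poly k}}) (N : nat) :
  (`|b.1| <= N)%N -> (`|b.2| <= N)%N -> (`|m.1| <= N)%N -> (`|m.2| <= N)%N ->
  ((c%:P%:P * (('X^`|N%:Z - b.1|)%:P * ('X^`|N%:Z - b.2| * f)))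
     `_`|N%:Z - m.2|)`_`|N%:Z - m.1| = c * coef2 f (sub2 b m).
Proof.
move=> h1 h2 h3 h4; rewrite coefCM (coefCM c) coef2_shift /sub2.
by congr (_ * coef2 _ (_, _)); lia.
Qed.

Lemma laurent_coef2_eq (s : seq (int * int)) (c : int * int -> k)
  (f : int * int -> {poly {poly k}}) (a : int * int) (g : {poly {poly k}}) :
  \sum_(b <- s) iotaK (c b) * (X1 k ^ (- b.1) * X2 k ^ (- b.2) * tf (f b)) =
    X1 k ^ (- a.1) * X2 k ^ (- a.2) * tf g ->
  forall m, \sum_(b <- s) c b * coef2 (f b) (sub2 b m) = coef2 g (sub2 a m).
Proof.
move=> H m; pose N := abs_bound (a :: m :: s).
have hN b : b \in a :: m :: s -> (`|b.1| <= N)%N /\ (`|b.2| <= N)%N by apply: abs_bound_mem.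
have [ha1 ha2] := hN a (mem_head _ _).
have [hm1 hm2] : (`|m.1| <= N)%N /\ (`|m.2| <= N)%N by apply: hN; rewrite !inE eqxx orbT.
have hs b : b \in s -> (`|b.1| <= N)%N /\ (`|b.2| <= N)%N.
  by move=> bs; apply: hN; rewrite !inE bs !orbT.
pose T b := (c b)%:P%:P * (('X^`|N%:Z - b.1|)%:P * ('X^`|N%:Z - b.2| * f b)).
have := congr1 (fun y => y * (X1 k ^+ N * X2 k ^+ N)) H; rewrite /= mulr_suml.
rewrite (eq_big_seq (fun b => tf (T b))); last first.
  by move=> b bs; have [h1 h2] := hs b bs; rewrite laurent_term_tofracK.
rewrite -[X1 k ^ (- a.1) * _ * tf g]mul1r -iotaK1 laurent_term_tofracK //.
rewrite -tofracK_sum => /tofracK_inj.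
move/(congr1 (fun h : {poly {poly k}} => (h`_`|N%:Z - m.2|)`_`|N%:Z - m.1|)).
rewrite /= !coef_sum coef_laurent_term // mul1r => <-.
apply: eq_big_seq => b bs; have [h1 h2] := hs b bs.
by rewrite /T coef_laurent_term.
Qed.

End LaurentCoefficients.

Definition le2 (b b' : int * int) := (b.1 <= b'.1) && (b.2 <= b'.2).

Lemma le2_trans a b c : le2 a b -> le2 b c -> le2 a c.
Proof. by rewrite /le2 => /andP [h1 h2] /andP [h3 h4]; apply/andP; split; lia. Qed.

Lemma le2_anti a b : le2 a b -> le2 b a -> a = b.
Proof.
case: a b => [a1 a2] [b1 b2]; rewrite /le2 /= => /andP [h1 h2] /andP [h3 h4].
by congr (_, _); lia.
Qed.

Lemma le2_sum_anti (a b : int * int) : le2 a b -> b.1 + b.2 <= a.1 + a.2 -> a = b.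
Proof.
move=> lab hs; apply: le2_anti (lab) _.
by move: lab; rewrite /le2 => /andP [l1 l2]; apply/andP; split; lia.
Qed.

Lemma exists_max_sum (s : seq (int * int)) : s != [::] ->
  exists2 b : int * int, b \in s &
    forall b' : int * int, b' \in s -> b'.1 + b'.2 <= b.1 + b.2.
Proof.
elim: s => [|b s IH] // _.
have [->|sn] := eqVneq s [::].
  by exists b; rewrite ?mem_head // => y; rewrite inE => /eqP ->.
have [b' b's hb'] := IH sn.
have [hle|hlt] := lerP (b.1 + b.2) (b'.1 + b'.2).
  exists b'; first by rewrite inE b's orbT.
  by move=> y; rewrite inE => /orP [/eqP ->|/hb'].
exists b; first exact: mem_head.
by move=> y; rewrite inE => /orP [/eqP ->|/hb' h] //; lia.
Qed.

Lemma big_seq_single (T : eqType) (V : nmodType) (s : seq T) (G : T -> V) (b0 : T) :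
  uniq s -> b0 \in s -> (forall b, b \in s -> b != b0 -> G b = 0) ->
  \sum_(b <- s) G b = G b0.
Proof.
move=> us bs h; rewrite (bigD1_seq b0) //= big1_seq ?addr0 //.
by move=> b /andP [nb bs']; apply: h.
Qed.

Section Triangularity.
Variable k : realFieldType.

Lemma coef2_sub2_notle2 (f : {poly {poly k}}) b m : ~~ le2 m b -> coef2 f (sub2 b m) = 0.
Proof.
rewrite /coef2 /sub2 /le2 /= => h; rewrite ifF //; apply/negbTE.
by move: h; rewrite !negb_and -!ltNge => /orP [h|h]; apply/orP; [left|right]; lia.
Qed.

Lemma coef2_sub2_diag (f : {poly {poly k}}) b : coef2 f (sub2 b b) = (f`_0)`_0.
Proof. by rewrite /coef2 /sub2 /= !subrr. Qed.

Variables (s : seq (int * int)) (c : int * int -> k) (f : int * int -> {poly {poly k}}).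
Variables (a : int * int) (g : {poly {poly k}}).
Hypotheses (us : uniq s) (f00 : forall b, b \in s -> ((f b)`_0)`_0 = 1)
  (Hcoef : forall m, \sum_(b <- s) c b * coef2 (f b) (sub2 b m) = coef2 g (sub2 a m)).

(* At a point of the support outside the cone below a whose coordinate sum is
   maximal, only that point contributes to the coefficient identity. *)
Lemma laurent_support_le2 b : b \in s -> c b != 0 -> le2 b a.
Proof.
move=> b0s cb0; apply/negPn/negP => nb0.
pose T := [seq b <- s | (c b != 0) && ~~ le2 b a].
have Tn : T != [::].
  by apply/eqP => /(congr1 (fun t => b \in t)); rewrite mem_filter cb0 nb0 b0s.
have [bm bmT hmax] := exists_max_sum Tn.
move: (bmT); rewrite mem_filter => /andP [/andP [cbm nbm] bms].
have := Hcoef bm; rewrite (coef2_sub2_notle2 g nbm) (@big_seq_single _ _ s _ bm) //.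
  by rewrite coef2_sub2_diag f00 // mulr1 => /eqP; rewrite (negbTE cbm).
move=> b' b's nb'.
have [->|cb'] := eqVneq (c b') 0; first by rewrite mul0r.
have [lb|nlb] := boolP (le2 bm b'); last by rewrite coef2_sub2_notle2 ?mulr0.
have nb'a : ~~ le2 b' a by apply: contra nbm => h; exact: le2_trans lb h.
have b'T : b' \in T by rewrite mem_filter cb' nb'a b's.
by rewrite (le2_sum_anti lb (hmax b' b'T)) eqxx in nb'.
Qed.

Lemma laurent_lead_coef1 : (g`_0)`_0 = 1 -> a \in s /\ c a = 1.
Proof.
move=> g00.
have h0 b : b \in s -> b != a -> c b * coef2 (f b) (sub2 b a) = 0.
  move=> bs nba; have [->|cb] := eqVneq (c b) 0; first by rewrite mul0r.
  have [lab|nlab] := boolP (le2 a b); last by rewrite coef2_sub2_notle2 ?mulr0.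
  by rewrite (le2_anti (laurent_support_le2 bs cb) lab) eqxx in nba.
have := Hcoef a; rewrite coef2_sub2_diag g00.
have [as_|nas] := boolP (a \in s).
  by rewrite (big_seq_single us as_ h0) coef2_sub2_diag f00 // mulr1.
rewrite big1_seq; first by move/eqP; rewrite eq_sym oner_eq0.
by move=> b /andP [_ bs]; apply: h0 => //; apply: contraNneq nas => <-.
Qed.

End Triangularity.

Lemma abs_sum_lt (a b : int * int) : le2 b a -> b != a -> 0 < b.1 -> 0 < b.2 ->
  (`|b.1| + `|b.2| < `|a.1| + `|a.2|)%N.
Proof.
case: a b => [a1 a2] [b1 b2]; rewrite /le2 /= => /andP [l1 l2] nba p1 p2.
have : (b1 != a1) || (b2 != a2).
  by apply: contraNT nba; rewrite negb_or !negbK => /andP [/eqP -> /eqP ->].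
by case/orP => ne; lia.
Qed.

Lemma fin_choice (T : eqType) (U : Type) (u0 : U) (P : T -> U -> Prop) (s : seq T) :
  (forall t, t \in s -> exists u, P t u) -> exists f : T -> U, forall t, t \in s -> P t (f t).
Proof.
elim: s => [|t s IH] h; first by exists (fun _ => u0).
have [u Pu] := h t (mem_head _ _).
have [f Pf] : exists f : T -> U, forall t', t' \in s -> P t' (f t').
  by apply: IH => t' t's; apply: h; rewrite inE t's orbT.
exists (fun t' => if t' == t then u else f t') => t'.
by rewrite inE; case: eqP => [-> | _] //= /Pf.
Qed.

(* A vanishing combination is pointed at a = b - (1, 0) for any b in its support. *)
Lemma pointed_free (k : realFieldType) (P1 P2 : {poly k}) (s : seq (int * int))
  (c : int * int -> k) (F : int * int -> ratfun k) :
  uniq s -> (forall b, b \in s -> pointed P1 P2 (F b) b.1 b.2) ->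
  \sum_(b <- s) iotaK (c b) * F b = 0 -> forall b, b \in s -> c b = 0.
Proof.
move=> us hF H b bs; apply/eqP/negP => /negP cb.
have [f hf] : exists f : int * int -> {poly {poly k}}, forall b, b \in s ->
    ((f b)`_0)`_0 = 1 /\ F b = X1 k ^ (- b.1) * X2 k ^ (- b.2) * tofracK (f b).
  apply: (@fin_choice _ _ (0 : {poly {poly k}}) (fun b g =>
    (g`_0)`_0 = 1 /\ F b = X1 k ^ (- b.1) * X2 k ^ (- b.2) * tofracK g)).
  by move=> b' /hF [f [_ [f00 Ef]]]; exists f.
pose a := (b.1 - 1, b.2).
have Hcoef : forall m, \sum_(b <- s) c b * coef2 (f b) (sub2 b m) = coef2 0 (sub2 a m).
  apply: laurent_coef2_eq; rewrite tofracK0 mulr0 -[in RHS]H.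
  by apply: eq_big_seq => b' b's; have [_ ->] := hf b' b's.
have := laurent_support_le2 us (fun b' b's => (hf b' b's).1) Hcoef bs cb.
by rewrite /le2 /a /=; apply/negP; rewrite negb_and -ltNge; apply/orP; left; lia.
Qed.

Lemma monic_palindromic_coef0 (k : realFieldType) (P : {poly k}) :
  P \is monic -> palindromic P -> P`_0 = 1.
Proof. by move=> m p; have := p 0%N (leq0n _); rewrite subn0 -lead_coefE (monicP m). Qed.

Lemma posp_nat (n : nat) : posp n%:Z = n. Proof. by []. Qed.
Lemma posp_Nnat (n : nat) : posp (- n%:Z) = 0%N. Proof. by case: n. Qed.

Section Cluster.
Variables (k : realFieldType) (P1 P2 : {poly k}).
Hypotheses (mon1 : P1 \is monic) (mon2 : P2 \is monic)
  (pal1 : palindromic P1) (pal2 : palindromic P2)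
  (pos1 : pos_coefs P1) (pos2 : pos_coefs P2).
Local Notation R := (ratfun k).
Local Notation tf := (@tofracK k).
Local Notation x := (xseq P1 P2).
Local Notation Pt := (Pat P1 P2).
Local Notation ul := (ulk P1 P2).

Lemma xseq_fwd1 (n : nat) : x n.+1 = (fwd P1 P2 n).1.
Proof. by rewrite /xseq ltz_nat. Qed.

Lemma xseq_fwd2 (n : nat) : x n.+2 = (fwd P1 P2 n).2.
Proof. by rewrite xseq_fwd1 /=; case: (fwd P1 P2 n). Qed.

Lemma xseq_bwd1 (n : nat) : x (1 - n%:Z) = (bwd P1 P2 n).1.
Proof.
case: n => [|n]; first by rewrite subr0 (xseq_fwd1 0).
rewrite /xseq ifF; last by apply/negbTE; rewrite -leNgt; lia.
by congr (bwd _ _ _).1; apply/eqP; rewrite -eqz_nat; lia.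
Qed.

Lemma xseq_bwd2 (n : nat) : x (2 - n%:Z) = (bwd P1 P2 n).2.
Proof.
case: n => [|n]; first by rewrite subr0 (xseq_fwd2 0).
have -> : 2 - n.+1%:Z = 1 - n%:Z by lia.
by rewrite xseq_bwd1 /=; case: (bwd P1 P2 n).
Qed.

Lemma Pat_neq0 j : Pt j != 0.
Proof. by rewrite /Pat; case: ifP => _; apply: monic_neq0. Qed.

Lemma Pat_nneg j i : 0 <= (Pt j)`_i.
Proof. by rewrite /Pat; case: ifP. Qed.

Lemma Pat_ulk j i : ul (Pt j)`_i.
Proof. by rewrite /Pat; case: ifP => _; [apply: ulk_coef2 | apply: ulk_coef1]. Qed.

Lemma Pat_coef0 j : (Pt j)`_0 = 1.
Proof. by rewrite /Pat; case: ifP => _; apply: monic_palindromic_coef0. Qed.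

Lemma Pat_palindromic j : palindromic (Pt j).
Proof. by rewrite /Pat; case: ifP. Qed.

Lemma PatD2 j : Pt (j + 2) = Pt j.
Proof.
rewrite /Pat; suff -> : odd (absz (j + 2)) = odd (absz j) by [].
have h : ((absz (j + 2)%R) %% 2 = (absz j) %% 2)%N by lia.
by move: h; rewrite !modn2; case: odd; case: odd.
Qed.

Lemma fwd_subfree n : subfree (fwd P1 P2 n).1 /\ subfree (fwd P1 P2 n).2.
Proof.
elim: n => [|n]; first by split; [exact: subfree_X1 | exact: subfree_X2].
rewrite /=; case: (fwd P1 P2 n) => a b [sa sb]; split=> //=.
apply: subfreeM; last exact: subfreeV.
by apply: subfree_evalK => //; [exact: Pat_neq0 | exact: Pat_nneg].
Qed.

Lemma bwd_subfree n : subfree (bwd P1 P2 n).1 /\ subfree (bwd P1 P2 n).2.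
Proof.
elim: n => [|n]; first by split; [exact: subfree_X1 | exact: subfree_X2].
rewrite /=; case: (bwd P1 P2 n) => a b [sa sb]; split=> //=.
apply: subfreeM; last exact: subfreeV.
by apply: subfree_evalK => //; [exact: Pat_neq0 | exact: Pat_nneg].
Qed.

Lemma xseq_neq0 j : x j != 0.
Proof.
apply: subfree_neq0; rewrite /xseq.
by case: ifP => _; [exact: (fwd_subfree _).1 | exact: (bwd_subfree _).1].
Qed.

Lemma xseq_exchange j : x (j + 1) * x (j - 1) = evalK (Pt j) (x j).
Proof.
have [j_ge2|j_lt2] := lerP 2 j.
  have [n ->] : exists n : nat, j = n.+2%:Z by exists `|j - 2|%N; lia.
  have -> : n.+2%:Z + 1 = n.+3 by lia.
  have -> : n.+2%:Z - 1 = n.+1 by lia.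
  rewrite xseq_fwd2 !xseq_fwd1 /=; case E: (fwd P1 P2 n) => [a b] /=.
  by rewrite divfK //; have := xseq_neq0 n.+1; rewrite xseq_fwd1 E.
have [n ->] : exists n : nat, j = 1 - n%:Z by exists `|1 - j|%N; lia.
have -> : 1 - n%:Z + 1 = 2 - n%:Z by lia.
have -> : 1 - n%:Z - 1 = 1 - n.+1%:Z by lia.
rewrite xseq_bwd1 xseq_bwd2 xseq_bwd1 /=; case E: (bwd P1 P2 n) => [a b] /=.
by rewrite mulrC divfK //; have := xseq_neq0 (2 - n%:Z); rewrite xseq_bwd2 E.
Qed.

Lemma xseq_exchangeE (j i i' : int) : i = j + 1 -> i' = j - 1 ->
  x i * x i' = evalK (Pt j) (x j).
Proof. by move=> -> ->; apply: xseq_exchange. Qed.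

Definition z1p (a : int * int) : R := z1 P1 P2 a.1 a.2.
Local Notation Sz := (spanned P1 P2 z1p).

Definition xmon a b c d := x 0 ^+ a * x 1 ^+ b * x 2 ^+ c * x 3 ^+ d.

Lemma xmonM a b c d a' b' c' d' :
  xmon a b c d * xmon a' b' c' d' = xmon (a + a') (b + b') (c + c') (d + d').
Proof. by rewrite /xmon !exprD; ring. Qed.

Lemma z1E a1 a2 : z1 P1 P2 a1 a2 = xmon (posp a2) (posp (- a1)) (posp (- a2)) (posp a1).
Proof. by []. Qed.

Lemma xmon_std a b c d : (a == 0)%N || (c == 0)%N -> (b == 0)%N || (d == 0)%N ->
  xmon a b c d = z1p (d%:Z - b%:Z, a%:Z - c%:Z).
Proof.
rewrite /z1p z1E /= !opprB.
by case/orP => /eqP ->; case/orP => /eqP ->; rewrite ?subr0 ?sub0r ?posp_nat ?posp_Nnat.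
Qed.

Lemma xmon_reduce02 a b c d :
  xmon a.+1 b c.+1 d = \sum_(i < size P2) iotaK P2`_i * xmon a (b + i) c d.
Proof.
have -> : xmon a.+1 b c.+1 d = (x 0 * x 2) * xmon a b c d by rewrite /xmon !exprS; ring.
rewrite [x 0 * _]mulrC (xseq_exchangeE (j := 1)) // evalK_sum mulr_suml.
by apply: eq_bigr => i _; rewrite /xmon exprD; ring.
Qed.

Lemma xmon_reduce13 a b c d :
  xmon a b.+1 c d.+1 = \sum_(i < size P1) iotaK P1`_i * xmon a b (c + i) d.
Proof.
have -> : xmon a b.+1 c d.+1 = (x 1 * x 3) * xmon a b c d by rewrite /xmon !exprS; ring.
rewrite [x 1 * _]mulrC (xseq_exchangeE (j := 2)) // evalK_sum mulr_suml.
by apply: eq_bigr => i _; rewrite /xmon exprD; ring.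
Qed.

(* Each reduction step lowers the total degree in x_0 and x_3. *)
Lemma xmon_spanned a b c d : Sz (xmon a b c d).
Proof.
move: {2}(a + d)%N (leqnn (a + d)) => n; elim: n a b c d => [|n IH] a b c d h.
  have [-> ->] : a = 0%N /\ d = 0%N by lia.
  by rewrite xmon_std ?eqxx ?orbT //; apply: spanned_gen.
have [hac|hac] := boolP ((a == 0)%N || (c == 0)%N).
  have [hbd|hbd] := boolP ((b == 0)%N || (d == 0)%N).
    by rewrite xmon_std //; apply: spanned_gen.
  case: b d h hbd => [|b] [|d] //= h _.
  rewrite xmon_reduce13; apply: spanned_sum => i _ _.
  by apply: spannedZ; [apply: ulk_coef1 | apply: IH; lia].
case: a c h hac => [|a] [|c] //= h _.
rewrite xmon_reduce02; apply: spanned_sum => i _ _.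
by apply: spannedZ; [apply: ulk_coef2 | apply: IH; lia].
Qed.

Lemma spanned_z1M y z : Sz y -> Sz z -> Sz (y * z).
Proof.
case=> l [hl ->] [l' [hl' ->]]; rewrite mulr_suml.
apply: spanned_sum => p pl _; rewrite mulr_sumr; apply: spanned_sum => q ql _.
have -> : iotaK p.1 * z1p p.2 * (iotaK q.1 * z1p q.2) =
  iotaK (p.1 * q.1) * (z1p p.2 * z1p q.2) by rewrite iotaKM; ring.
apply: spannedZ; first by apply: ulk_mul; [apply: hl | apply: hl'].
by rewrite /z1p !z1E xmonM; apply: xmon_spanned.
Qed.

Lemma spanned_z1_iotaK c : ul c -> Sz (iotaK c).
Proof.
move=> hc; rewrite -[iotaK c]mulr1; apply: spannedZ => //.
have -> : 1 = xmon 0 0 0 0 by rewrite /xmon !expr0 !mulr1.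
exact: xmon_spanned.
Qed.

Lemma spanned_exchange_step (jv jw : int) (u v w t y : R) :
  Sz u -> Sz v -> Sz w -> Sz t -> w != 0 ->
  u * w = evalK (Pt jv) v -> v * t = evalK (Pt jw) w ->
  y * w = evalK (Pt jv) t -> Sz y.
Proof.
move=> Su Sv Sw St w0 e1 e2 e3.
have [E [SE eE]] := palindromic_exchange (ulk_one P1 P2) (@ulk_opp _ P1 P2)
  (@spannedD _ P1 P2 _) spanned_z1M spanned_z1_iotaK Sw (@Pat_ulk jv) (@Pat_ulk jw)
  (@Pat_coef0 jw) (@Pat_palindromic jv) Su Sv St e1 e2.
by have -> : y = E by apply: (mulIf w0); rewrite e3 eE mulrC.
Qed.

Definition spanned_window (j : int) :=
  [/\ Sz (x j), Sz (x (j + 1)), Sz (x (j + 2)) & Sz (x (j + 3))].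

Lemma spanned_window0 : spanned_window 0.
Proof.
rewrite /spanned_window !add0r.
have -> : x 0 = xmon 1 0 0 0 by rewrite /xmon !expr0 !mulr1.
have -> : x 1 = xmon 0 1 0 0 by rewrite /xmon !expr0 mul1r !mulr1.
have -> : x 2 = xmon 0 0 1 0 by rewrite /xmon !expr0 !mul1r mulr1.
have -> : x 3 = xmon 0 0 0 1 by rewrite /xmon !expr0 !mul1r.
by split; apply: xmon_spanned.
Qed.

Lemma spanned_windowS j : spanned_window j -> spanned_window (j + 1).
Proof.
case=> S0 S1 S2 S3; rewrite /spanned_window -!addrA /=.
split => //; apply: (spanned_exchange_step (jv := j + 1) (jw := j + 2) S0 S1 S2 S3).
- exact: xseq_neq0.
- by rewrite mulrC; apply: xseq_exchangeE; lia.
- by rewrite mulrC; apply: xseq_exchangeE; lia.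
- by rewrite -(@PatD2 (j + 1)) -addrA; apply: xseq_exchangeE; lia.
Qed.

Lemma spanned_windowP j : spanned_window (j + 1) -> spanned_window j.
Proof.
rewrite /spanned_window -!addrA /=; case=> S1 S2 S3 S4.
split => //; apply: (spanned_exchange_step (jv := j + 3) (jw := j + 2) S4 S3 S2 S1).
- exact: xseq_neq0.
- by apply: xseq_exchangeE; lia.
- by apply: xseq_exchangeE; lia.
- have -> : j + 3 = j + 1 + 2 by lia.
  by rewrite PatD2 mulrC; apply: xseq_exchangeE; lia.
Qed.

Lemma spanned_xseq j : Sz (x j).
Proof.
have win_pos (n : nat) : spanned_window n.
  elim: n => [|n IH]; first exact: spanned_window0.
  have -> : n.+1%:Z = n%:Z + 1 by lia.
  exact: spanned_windowS.
have win_neg (n : nat) : spanned_window (- n%:Z).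
  elim: n => [|n IH]; first exact: spanned_window0.
  apply: spanned_windowP.
  by have -> : - n.+1%:Z + 1 = - n%:Z by lia.
have [j_ge0|j_lt0] := lerP 0 j.
  have -> : j = `|j|%N by lia.
  by case: (win_pos `|j|%N).
have -> : j = - `|j|%N%:Z by lia.
by case: (win_neg `|j|%N).
Qed.

Lemma inA_spanned y : inA P1 P2 y -> Sz y.
Proof.
elim=> [j|c hc|y1 y2 _ h1 _ h2|y1 y2 _ h1 _ h2].
- exact: spanned_xseq.
- exact: spanned_z1_iotaK.
- exact: spannedD.
- exact: spanned_z1M.
Qed.

Lemma exprzN_posp (y : R) (b : int) : y ^ (- b) = y ^+ posp (- b) / y ^+ posp b.
Proof.
case: b => n; first by rewrite posp_Nnat posp_nat expr0 div1r -exprnN.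
by rewrite NegzE opprK posp_nat /= expr0 divr1.
Qed.

Definition z1_numer (b : int * int) : {poly {poly k}} :=
  (P2%:P) ^+ posp b.2 * (P1^:P) ^+ posp b.1.

Lemma z1_numer_coef00 b : ((z1_numer b)`_0)`_0 = 1.
Proof.
have coef0X (S : comNzRingType) (p : {poly S}) n : (p ^+ n)`_0 = p`_0 ^+ n.
  by rewrite -!horner_coef0 horner_exp.
rewrite /z1_numer coef0M !coef0X coefC eqxx coef_map /= coef0M !coef0X coefC eqxx.
by rewrite !monic_palindromic_coef0 // !expr1n mulr1.
Qed.

Lemma z1p_laurent b : z1p b = X1 k ^ (- b.1) * X2 k ^ (- b.2) * tf (z1_numer b).
Proof.
have x0E : x 0 = tf (P2%:P) / X2 k by rewrite (xseq_bwd1 1) /= /Pat /= evalK_X1.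
have x3E : x 3 = tf (P1^:P) / X1 k by rewrite (xseq_fwd1 2) /= /Pat /= evalK_X2.
rewrite /z1p /z1 /z1_numer tofracKM !tofracKX x0E x3E !exprzN_posp !expr_div_n.
rewrite -[x 1]/(X1 k) -[x 2]/(X2 k).
move: (tf P2%:P ^+ _) (tf P1^:P ^+ _) (X1 k ^+ _) (X1 k ^+ _) (X2 k ^+ _) (X2 k ^+ _).
by move=> A B u v w z; ring.
Qed.

Lemma pointed_triangular y a : inA P1 P2 y -> pointed P1 P2 y a.1 a.2 ->
  exists s (c : int * int -> k), [/\ uniq s, forall b, b \in s -> ul (c b),
    y = \sum_(b <- s) iotaK (c b) * z1p b, a \in s /\ c a = 1 &
    forall b, b \in s -> c b != 0 -> le2 b a].
Proof.
move=> yA [g [_ [g00 Eg]]].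
have [l [hl El]] := inA_spanned yA.
have [s [c [us hc hF]]] := collect_terms hl.
have Hcoef : forall m, \sum_(b <- s) c b * coef2 (z1_numer b) (sub2 b m) = coef2 g (sub2 a m).
  apply: laurent_coef2_eq; rewrite -Eg El hF.
  by apply: eq_bigr => b _; rewrite z1p_laurent.
have f00 b : b \in s -> ((z1_numer b)`_0)`_0 = 1 by rewrite z1_numer_coef00.
exists s, c; split=> //; first by rewrite El hF.
  exact: laurent_lead_coef1 us f00 Hcoef g00.
exact: laurent_support_le2 us f00 Hcoef.
Qed.

Section PointedFamily.
Variable F : int * int -> R.
Hypotheses (FA : forall a, inA P1 P2 (F a))
  (Fpt : forall a, pointed P1 P2 (F a) a.1 a.2)
  (Fstd : forall a : int * int, ~ (0 < a.1 /\ 0 < a.2) -> F a = z1p a).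

Lemma z1p_spanned_std (a : int * int) : ~~ ((0 < a.1) && (0 < a.2)) -> spanned P1 P2 F (z1p a).
Proof.
move=> a_std; rewrite -Fstd; first exact: spanned_gen.
by case=> h1 h2; move: a_std; rewrite h1 h2.
Qed.

Lemma z1p_spanned_pointed a : spanned P1 P2 F (z1p a).
Proof.
move: {2}(`|a.1| + `|a.2|)%N (leqnn (`|a.1| + `|a.2|)) => n.
elim: n a => [|n IH] a hn.
  by apply: z1p_spanned_std; apply/negP => /andP [h1 h2]; lia.
have [a_pos|a_std] := boolP ((0 < a.1) && (0 < a.2)); last exact: z1p_spanned_std.
have [s [c [us hc EF [as_ ca1] supp]]] := pointed_triangular (FA a) (Fpt a).
have -> : z1p a = F a - \sum_(b <- s | b != a) iotaK (c b) * z1p b.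
  by rewrite EF (bigD1_seq a) //= ca1 iotaK1 mul1r addrK.
apply: spannedD; first exact: spanned_gen.
apply/spannedN/spanned_sum => b bs nba.
have [->|cb] := eqVneq (c b) 0; first by rewrite iotaK0 mul0r; exact: spanned0.
apply: spannedZ; first exact: hc.
have [/andP [b1 b2]|b_std] := boolP ((0 < b.1) && (0 < b.2)); last exact: z1p_spanned_std.
by apply: IH; have := abs_sum_lt (supp b bs cb) nba b1 b2; lia.
Qed.

End PointedFamily.

End Cluster.

Theorem proposition2p9 (k : realFieldType) (P1 P2 : {poly k})
  (mon1 : P1 \is monic) (mon2 : P2 \is monic)
  (pal1 : palindromic P1) (pal2 : palindromic P2)
  (pos1 : pos_coefs P1) (pos2 : pos_coefs P2)
  (x : int -> int -> ratfun k)
  (xA : forall a1 a2 : int, inA P1 P2 (x a1 a2))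
  (xpt : forall a1 a2 : int, pointed P1 P2 (x a1 a2) a1 a2)
  (xstd : forall a1 a2 : int, ~ (0 < a1 /\ 0 < a2) -> x a1 a2 = z1 P1 P2 a1 a2) :
  is_basisA P1 P2 (fun a => x a.1 a.2).
Proof.
split; first by move=> a; apply: xA.
split.
  move=> s c us _; apply: pointed_free => // b _; exact: xpt.
move=> y /(inA_spanned mon1 mon2 pal1 pal2 pos1 pos2) Sy.
have [l [hl ->]] := spanned_trans (z1p_spanned_pointed mon1 mon2 pal1 pal2 pos1 pos2
  (fun a => xA a.1 a.2) (fun a => xpt a.1 a.2) (fun a => xstd a.1 a.2)) Sy.
have [s [c [us hc hF]]] := collect_terms hl.
by exists s, c; split=> //; apply: hF.
Qed.
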